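(* Let $q\ge 2$ and $0\le\rho<1-1/q$, and let $\gamma>0$. Then for all sufficiently large $n$ the following holds. Let $C\subseteq\{0,\dots,q-1\}^n$ be a code of rate $1-H_q(\rho)+\gamma$. Then there exists a codeword $c\in C$ such that for at least a $1-q^{-\Omega(\gamma n)}$ fraction of error patterns $e\in\{0,\dots,q-1\}^n$ of Hamming weight at most $\rho n$, the Hamming ball of radius $\rho n$ around $c+e$ contains at least two codewords of $C$.
   Context: $H_q(x)=x\log_q(q-1)-x\log_q x-(1-x)\log_q(1-x)$ is the $q$-ary entropy function. A code $C\subseteq\Sigma^n$ with $|\Sigma|=q$ has rate $\log_q|C|/n$. Addition $c+e$ is coordinatewise (e.g. modulo $q$). The Hamming weight of a vector is its number of nonzero coordinates, and the Hamming ball of radius $r$ around $y$ is the set of vectors differing from $y$ in at most $r$ coordinates. *)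

From mathcomp Require Import all_boot.
From Stdlib Require Import Reals.
Set Implicit Arguments. Unset Strict Implicit. Unset Printing Implicit Defensive.

Definition word (q n : nat) := {ffun 'I_n -> 'I_q}.

Definition addq (q : nat) (a b : 'I_q) : 'I_q :=
  Ordinal (ltn_pmod (a + b) (leq_ltn_trans (leq0n a) (ltn_ord a))).

Definition wadd (q n : nat) (c e : word q n) : word q n :=
  [ffun i => addq (c i) (e i)].

Definition hwt (q n : nat) (e : word q n) : nat := #|[set i | nat_of_ord (e i) != 0%N]|.

Definition hdist (q n : nat) (x y : word q n) : nat := #|[set i | x i != y i]|.

Open Scope R_scope.

Definition Rleb (x y : R) : bool := if Rle_dec x y then true else false.

Definition logq (q : nat) (x : R) : R := ln x / ln (INR q).

(* q-ary entropy function (with 0 log 0 = 0, since Stdlib's ln 0 = 0) *)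
Definition Hq (q : nat) (x : R) : R :=
  x * logq q (INR q - 1) - x * logq q x - (1 - x) * logq q (1 - x).

Definition rate (q n : nat) (C : {set word q n}) : R :=
  logq q (INR #|C|) / INR n.

Definition errs (q n : nat) (r : R) : {set word q n} :=
  [set e : word q n | Rleb (INR (hwt e)) r].

Definition bad_errs (q n : nat) (C : {set word q n}) (c : word q n) (r : R)
  : {set word q n} :=
  [set e in errs q n r |
     leq 2 #|[set c' in C | Rleb (INR (hdist c' (wadd c e))) r]|].

From Stdlib Require Import Reals Lra Lia.
From mathcomp Require Import all_boot zify.
Set Implicit Arguments. Unset Strict Implicit. Unset Printing Implicit Defensive.

(* Call an error pattern [e] good for a codeword [c] when it is in the ball but
   not bad.  The map [(c, e) |-> c + e] is injective on pairs with [e] good for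
   [c]: if [c + e = c' + e'] with [c != c'], the ball around [c + e] holds both
   [c] and [c'].  Hence the good sets have total size at most [q ^ n], and some
   codeword [c] has at most [q ^ n / #|C|] good patterns.  The ball contains all
   words of weight [k = floor (rho n)], so it has at least
   ['C(n, k) (q - 1) ^ k >= q ^ (n H_q(rho) - o(n))] elements, while
   [#|C| >= q ^ (n (1 - H_q(rho) + gamma))]; the good fraction is therefore at
   most [q ^ (- gamma n / 2)] for large [n], i.e. [kappa = 1/2] works. *)

Section Combinatorics.
Local Open Scope nat_scope.

Lemma addqI q (a : 'I_q) : injective (addq a).
Proof.
move=> b b' /(congr1 val) /= /eqP; rewrite eqn_modDl => /eqP.
by rewrite !modn_small // => /val_inj.
Qed.

Lemma addq_eq_l q (a b : 'I_q) : (addq a b == a) = (b == 0 :> nat).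
Proof.
have := eqn_modDl a b 0 q.
by rewrite addn0 (modn_small (ltn_ord a)) (modn_small (ltn_ord b)) mod0n.
Qed.

Lemma hdist_wadd q n (c e : word q n) : hdist c (wadd c e) = hwt e.
Proof. by apply: eq_card => i; rewrite !inE ffunE eq_sym addq_eq_l. Qed.

Lemma card_words q n (A : {set word q n}) : #|A| <= q ^ n.
Proof. by apply: leq_trans (max_card (mem A)) _; rewrite card_ffun !card_ord. Qed.

Definition good_errs q n (C : {set word q n}) (c : word q n) (r : R) :=
  errs q n r :\: bad_errs C c r.

Lemma card_bad_good_errs q n (C : {set word q n}) c r :
  #|bad_errs C c r| + #|good_errs C c r| = #|errs q n r|.
Proof.
rewrite -(cardsID (bad_errs C c r) (errs q n r)) (setIidPr _) //.
by apply/subsetP => e; rewrite inE => /andP[].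
Qed.

Lemma wadd_inj_good_errs q n (C : {set word q n}) r :
  {in [set p : word q n * word q n | p.1 \in C & p.2 \in good_errs C p.1 r] &,
   injective (fun p => wadd p.1 p.2)}.
Proof.
move=> [c e] [c' e']; rewrite 2!inE /=.
move=> /andP[Cc /setDP[He Hb]] /andP[Cc' /setDP[He' _]] eq_sum.
set S := [set x in C | Rleb (INR (hdist x (wadd c e))) r].
have cS : c \in S by rewrite inE Cc hdist_wadd; rewrite inE in He.
have c'S : c' \in S by rewrite inE Cc' eq_sum hdist_wadd; rewrite inE in He'.
have ecc : c = c'.
  apply/eqP; apply: contraNT Hb => neq_cc'; rewrite inE He.
  have := subset_leq_card (_ : [set c; c'] \subset S).
  rewrite cards2 neq_cc'; apply; apply/subsetP => x.
  by rewrite in_set2 => /orP[] /eqP ->.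
subst c'; congr pair; apply/ffunP => i.
by apply: (@addqI _ (c i)); move/ffunP: eq_sum => /(_ i); rewrite !ffunE.
Qed.

Lemma sum_card_good_errs q n (C : {set word q n}) r :
  \sum_(c in C) #|good_errs C c r| <= q ^ n.
Proof.
pose P := [set p : word q n * word q n | p.1 \in C & p.2 \in good_errs C p.1 r].
have -> : \sum_(c in C) #|good_errs C c r| = #|P|.
  rewrite -sum1_card; under eq_bigr do rewrite -sum1_card.
  by rewrite pair_big_dep; apply: eq_bigl => p; rewrite /P inE.
rewrite -(card_in_imset (@wadd_inj_good_errs _ _ C r)); exact: card_words.
Qed.

Lemma exists_mul_card_le (T : finType) (A : {set T}) (f : T -> nat) m :
  A != set0 -> \sum_(i in A) f i <= m -> exists2 i, i \in A & #|A| * f i <= m.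
Proof.
move=> A0 sum_le; case: (pickP [pred i | (i \in A) && (#|A| * f i <= m)]).
  by move=> i /andP[]; exists i.
move=> none; have : \sum_(i in A) m.+1 <= \sum_(i in A) #|A| * f i.
  by apply: leq_sum => i Ai; have := none i; rewrite /= Ai ltnNge => /negbT.
rewrite -big_distrr sum_nat_const /= leq_pmul2l ?card_gt0 // => lt_m_sum.
by have := leq_trans lt_m_sum sum_le; rewrite ltnn.
Qed.

Definition supp q n (w : word q n) : {set 'I_n} := [set i | w i != 0 :> nat].

Lemma card_words_with_supp q n (A : {set 'I_n}) : 0 < q ->
  #|[set w : word q n | supp w == A]| = q.-1 ^ #|A|.
Proof.
move=> q0; pose zero : simpl_pred 'I_q := [pred a : 'I_q | nat_of_ord a == 0].
pose F (i : 'I_n) : pred 'I_q := if i \in A then predC zero else zero.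
have -> : #|[set w : word q n | supp w == A]| = #|(family F : simpl_pred (word q n))|.
  apply: eq_card => w; rewrite inE; apply/eqP/familyP => [suppA i|Fw].
    by rewrite /F -suppA inE; case: ifPn => //= /negbNE.
  by apply/setP => i; rewrite inE; have := Fw i; rewrite /F; case: (i \in A) => //= /eqP ->.
have card_zero : #|zero| = 1.
  rewrite -(card1 (Ordinal q0)); apply: eq_card => a; rewrite !inE.
  by apply/eqP/eqP => [a0|->] //; apply: val_inj.
have card_nonzero : #|predC zero| = q.-1.
  by have := cardC zero; rewrite card_ord card_zero add1n => eq_q; rewrite -[in RHS]eq_q.
rewrite (@card_family _ (fun _ => _)) foldrE big_image /= -prod_nat_const.
by rewrite big_mkcond [RHS]big_mkcond; apply: eq_bigr => i _; rewrite /F; case: (i \in A).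
Qed.

Lemma card_words_of_weight q n k : 0 < q ->
  #|[set w : word q n | hwt w == k]| = 'C(n, k) * q.-1 ^ k.
Proof.
move=> q0; rewrite -sum1_card.
rewrite (partition_big (@supp q n) [pred A : {set 'I_n} | #|A| == k]) /=; last first.
  by move=> w; rewrite inE.
transitivity (\sum_(A : {set 'I_n} | #|A| == k) q.-1 ^ k).
  apply: eq_bigr => A /eqP <-; rewrite -(card_words_with_supp A q0) -sum1_card.
  apply: eq_bigl => w; rewrite !inE.
  by apply/andP/idP => [[]//|/eqP <-]; split.
rewrite (eq_bigl (mem [set A : {set 'I_n} | #|A| == k])); last by move=> A; rewrite !inE.
by rewrite sum_nat_const card_draws card_ord.
Qed.

Lemma card_errs_ge q n k (r : R) : 0 < q -> Rle (INR k) r ->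
  'C(n, k) * q.-1 ^ k <= #|errs q n r|.
Proof.
move=> q0 kr; rewrite -card_words_of_weight //; apply: subset_leq_card.
apply/subsetP => w; rewrite !inE => /eqP ->.
by rewrite /Rleb; case: Rle_dec.
Qed.

Lemma card_errs_gt0 q n (r : R) : 0 < q -> Rle 0 r -> 0 < #|errs q n r|.
Proof.
move=> q_gt0 r_ge0; apply: leq_trans (@card_errs_ge q n 0 r q_gt0 r_ge0).
by rewrite bin0 expn0.
Qed.

End Combinatorics.

Section BinomialMode.
Local Open Scope nat_scope.
Variables n k : nat.
Hypothesis le_kn : k <= n.

Let term j := 'C(n, j) * k ^ j * (n - k) ^ (n - j).

Lemma binom_term_rec j : j < n -> term j.+1 * j.+1 * (n - k) = term j * (n - j) * k.
Proof.
move=> lt_jn; rewrite /term.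
have -> : n - j = (n - j.+1).+1 by lia.
rewrite expnS expnSr; have := mul_bin_left n j.
have -> : (n - j.+1).+1 = n - j by lia.
move: 'C(n, j.+1) 'C(n, j) (k ^ j) ((n - k) ^ (n - j.+1)) => a b c d h.
rewrite (_ : a * (k * c) * d * j.+1 * (n - k) = (j.+1 * a) * (k * c * d * (n - k))); last by lia.
by rewrite h; lia.
Qed.

Lemma binom_term_le_succ j : j < k -> term j <= term j.+1.
Proof.
move=> lt_jk; have := binom_term_rec (leq_trans lt_jk le_kn) => rec.
have [lt_kn|ge_kn] := ltnP k n; last first.
  suff -> : term j = 0 by [].
  by rewrite /term (_ : n - k = 0) ?exp0n ?muln0 //; lia.
have hf : j.+1 * (n - k) <= (n - j) * k by nia.
rewrite -(@leq_pmul2r (j.+1 * (n - k))) ?muln_gt0 ?subn_gt0 ?lt_kn //.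
move: (term j) (term j.+1) rec => a b rec; nia.
Qed.

Lemma binom_term_succ_le j : k <= j -> j < n -> term j.+1 <= term j.
Proof.
move=> le_kj lt_jn; have := binom_term_rec lt_jn => rec.
have hf : (n - j) * k <= j.+1 * (n - k) by nia.
rewrite -(@leq_pmul2r (j.+1 * (n - k))) ?muln_gt0 ?subn_gt0; last lia.
move: (term j) (term j.+1) rec => a b rec; nia.
Qed.

Lemma binom_term_le_mode j : j <= n -> term j <= term k.
Proof.
move=> le_jn; have [le_jk|lt_kj] := leqP j k.
  have mono : {in [pred i | i <= k] &, forall a b, a <= b -> term a <= term b}.
    apply: (homo_leq_in (r := fun x y => x <= y)) => //=.
    - exact: leq_trans.
    - by move=> a b _ le_bk c /andP[_ lt_cb]; rewrite inE (leq_trans (ltnW lt_cb) le_bk).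
    - by move=> i _ lt_ik; apply: binom_term_le_succ.
  by apply: (mono j k); rewrite ?inE ?leqnn.
have mono : {in [pred i | k <= i <= n] &, forall a b, a <= b -> term b <= term a}.
  apply: (homo_leq_in (r := fun x y => y <= x)) => //=.
  - by move=> y x z le_yx le_zy; apply: leq_trans le_zy le_yx.
  - move=> a b /andP[le_ka _] /andP[_ le_bn] c /andP[lt_ac lt_cb].
    by rewrite inE (leq_trans le_ka (ltnW lt_ac)) (leq_trans (ltnW lt_cb) le_bn).
  - by move=> i /andP[le_ki _] /andP[_ lt_in]; apply: binom_term_succ_le.
by apply: (mono k j); rewrite ?inE ?leqnn ?le_kn ?(ltnW lt_kj).
Qed.

(* [n ^ n = (k + (n - k)) ^ n] is a sum of [n + 1] binomial terms, the [k]-th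
   of which is the largest. *)
Lemma expn_le_binomial_mode :
  n ^ n <= n.+1 * ('C(n, k) * k ^ k * (n - k) ^ (n - k)).
Proof.
rewrite -[X in X ^ _](subnK le_kn) expnDn -[X in X * _](card_ord n.+1).
rewrite -sum_nat_const; apply: leq_sum => i _.
have := binom_term_le_mode (ltn_ord i : i <= n).
by rewrite /term [(_ ^ (n - i)) * _]mulnC mulnA.
Qed.

End BinomialMode.

Local Open Scope R_scope.

Lemma ln_le x y : 0 < x -> x <= y -> ln x <= ln y.
Proof.
move=> x_gt0 [lt_xy|<-]; last exact: Rle_refl.
exact/Rlt_le/ln_increasing.
Qed.

Lemma ln_0 : ln 0 = 0.
Proof. by rewrite /ln; case: Rlt_dec => // lt00; case: (Rlt_irrefl _ lt00). Qed.

Lemma ln_le_sub1 y : 0 < y -> ln y <= y - 1.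
Proof. by move=> y_gt0; have := exp_ineq1_le (ln y); rewrite exp_ln //; lra. Qed.

Lemma exp_le x y : x <= y -> exp x <= exp y.
Proof. by move=> [lt_xy|->]; [exact/Rlt_le/exp_increasing | exact: Rle_refl]. Qed.

Lemma le_mul_exp_of_ln x y s : 0 < x -> 0 < y -> ln x + s <= ln y -> x <= y * exp (- s).
Proof.
move=> x_gt0 y_gt0 le_ln; rewrite -(exp_ln x) // -(exp_ln y) // -exp_plus.
by apply: exp_le; lra.
Qed.

Lemma INR_gt0 m : (0 < m)%N -> 0 < INR m.
Proof. by move=> /ltP; apply: lt_0_INR. Qed.

Lemma INR_expn a m : INR (a ^ m) = INR a ^ m.
Proof. by elim: m => [|m IHm] //; rewrite expnS -multE mult_INR IHm. Qed.

(* Also for [a = 0], since Stdlib's [ln] vanishes outside [(0, +oo)]. *)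
Lemma ln_INR_expn a m : ln (INR (a ^ m)) = INR m * ln (INR a).
Proof.
have [->|a_gt0] := posnP a.
  by case: m => [|m]; rewrite ?expn0 ?exp0n //= ?ln_1 ?ln_0; ring.
by rewrite INR_expn ln_pow //; apply: INR_gt0.
Qed.

Lemma ln_INR_muln a b : (0 < a)%N -> (0 < b)%N ->
  ln (INR (a * b)) = ln (INR a) + ln (INR b).
Proof. by move=> a_gt0 b_gt0; rewrite -multE mult_INR ln_mult //; apply: INR_gt0. Qed.

Lemma ln_INR_le a b : (0 < a)%N -> (a <= b)%N -> ln (INR a) <= ln (INR b).
Proof. by move=> a_gt0 /leP le_ab; apply: ln_le (INR_gt0 a_gt0) (le_INR _ _ le_ab). Qed.

Lemma ln_card_words_le q n (A : {set word q n}) : (0 < q)%N ->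
  ln (INR #|A|) <= INR n * ln (INR q).
Proof.
move=> q_gt0; rewrite -ln_INR_expn.
have [->|A_gt0] := posnP #|A|; last exact: ln_INR_le A_gt0 (card_words A).
rewrite /= ln_0 -ln_1; change (ln (INR 1) <= ln (INR (q ^ n))).
by apply: ln_INR_le; rewrite ?expn_gt0 ?q_gt0.
Qed.

Definition entropy x := - x * ln x - (1 - x) * ln (1 - x).

Lemma Hq_mul_ln q x : 1 < INR q ->
  Hq q x * ln (INR q) = x * ln (INR q - 1) + entropy x.
Proof.
move=> q_gt1; have : ln (INR q) <> 0 by apply: ln_neq_0; lra.
by rewrite /Hq /logq /entropy => ?; field.
Qed.

Lemma xlnx_le x y : 0 <= x -> x <= y -> x * ln x <= x * ln y.
Proof.
move=> [x_gt0|<-] le_xy; last by rewrite !Rmult_0_l; apply: Rle_refl.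
by apply: Rmult_le_compat_l; [lra | apply: ln_le].
Qed.

Lemma entropy_sub_le x rho : 0 <= x -> x <= rho -> rho < 1 ->
  entropy rho - entropy x <= (rho - x) * (Rabs (ln rho) + / (1 - rho)).
Proof.
move=> x_ge0 le_xrho rho_lt1.
have rho'_gt0 : 0 < 1 - rho by lra.
have x'_gt0 : 0 < 1 - x by lra.
have ln_x' : ln (1 - x) = ln (1 - rho) + ln ((1 - x) / (1 - rho)).
  by rewrite -ln_mult; [congr ln; field; lra | lra | exact: Rdiv_lt_0_compat].
have ln_ratio : ln ((1 - x) / (1 - rho)) <= (rho - x) * / (1 - rho).
  have -> : (rho - x) * / (1 - rho) = (1 - x) / (1 - rho) - 1 by field; lra.
  exact/ln_le_sub1/Rdiv_lt_0_compat.
have ln_rho'_le0 : ln (1 - rho) <= 0 by rewrite -ln_1; apply: ln_le; lra.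
have xlnx := xlnx_le x_ge0 le_xrho.
have abs_ln := Rle_abs (- ln rho); rewrite Rabs_Ropp in abs_ln.
have inv_gt0 : 0 < / (1 - rho) by apply: Rinv_0_lt_compat.
have t1 : (1 - x) * ln ((1 - x) / (1 - rho)) <= (rho - x) * / (1 - rho).
  have : 0 <= (rho - x) * / (1 - rho) by apply: Rmult_le_pos; lra.
  nra.
rewrite /entropy ln_x'; nra.
Qed.

Lemma INR_xlnx_ratio a n : (0 < n)%N ->
  INR n * (INR a / INR n * ln (INR a / INR n)) = INR a * ln (INR a) - INR a * ln (INR n).
Proof.
move=> /INR_gt0 n_gt0; have [->|/INR_gt0 a_gt0] := posnP a.
  by rewrite /= /Rdiv !Rmult_0_l; ring.
rewrite /Rdiv ln_mult ?ln_Rinv //; last exact: Rinv_0_lt_compat.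
by field; lra.
Qed.

Lemma INR_entropy_ratio n k : (0 < n)%N -> (k <= n)%N ->
  INR n * entropy (INR k / INR n) =
  INR n * ln (INR n) - INR k * ln (INR k) - INR (n - k) * ln (INR (n - k)).
Proof.
move=> n_gt0 le_kn; have nR_gt0 := INR_gt0 n_gt0; rewrite /entropy.
have -> : 1 - INR k / INR n = INR (n - k) / INR n.
  by rewrite minus_INR; [field; lra | apply/leP].
set x := INR k / INR n; set y := INR (n - k) / INR n.
have -> : INR n * (- x * ln x - y * ln y) = - (INR n * (x * ln x)) - INR n * (y * ln y) by ring.
rewrite !INR_xlnx_ratio // minus_INR; [ring | exact/leP].
Qed.

Lemma expnn_gt0 m : (0 < m ^ m)%N.
Proof. by rewrite expn_gt0; case: m. Qed.

(* Only the words of weight exactly [k] are counted; the binomial-mode bound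
   turns ['C(n, k)] into [exp (n entropy (k / n)) / (n + 1)]. *)
Lemma ln_card_errs_ge_floor q n k (r : R) : (2 <= q)%N -> (0 < n)%N -> (k <= n)%N ->
  INR k <= r ->
  INR k * ln (INR q - 1) + INR n * entropy (INR k / INR n) <=
  ln (INR n + 1) + ln (INR #|errs q n r|).
Proof.
move=> q_ge2 n_gt0 le_kn le_kr; set b := #|errs q n r|.
have q'_gt0 : (0 < q.-1)%N by rewrite -ltnS prednK // ltnW.
have count : (n ^ n * q.-1 ^ k <= n.+1 * b * (k ^ k * (n - k) ^ (n - k)))%N.
  apply: leq_trans (leq_mul (expn_le_binomial_mode le_kn) (leqnn _)) _.
  have := card_errs_ge n (ltnW q_ge2) le_kr; rewrite -/b.
  move: 'C(n, k) (q.-1 ^ k)%N (k ^ k)%N ((n - k) ^ (n - k))%N => c p x y le_cp_b.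
  rewrite (_ : n.+1 * (c * x * y) * p = n.+1 * (c * p) * (x * y))%N; last first.
    by rewrite mulnAC -!mulnA (mulnCA p).
  by rewrite leq_mul2r leq_mul2l le_cp_b !orbT.
have b_gt0 : (0 < b)%N.
  rewrite lt0n; apply: contraTneq count => ->.
  by rewrite muln0 mul0n -ltnNge muln_gt0 !expn_gt0 n_gt0 q'_gt0.
have nn_gt0 : (0 < n ^ n)%N by rewrite expn_gt0 n_gt0.
have q'k_gt0 : (0 < q.-1 ^ k)%N by rewrite expn_gt0 q'_gt0.
have := ln_INR_le _ count; rewrite muln_gt0 nn_gt0 q'k_gt0 => /(_ isT).
rewrite !ln_INR_muln ?muln_gt0 ?nn_gt0 ?q'k_gt0 ?b_gt0 ?expnn_gt0 ?ltn0Sn //.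
rewrite !ln_INR_expn S_INR INR_entropy_ratio // (_ : INR q.-1 = INR q - 1); first lra.
by rewrite -{2}(prednK (ltnW q_ge2)) S_INR; ring.
Qed.

Lemma entropy_floor_le n k rho L : (0 < n)%N -> 0 <= rho < 1 -> 0 <= L ->
  INR k <= rho * INR n < INR k + 1 ->
  INR n * (rho * L + entropy rho) <=
  INR k * L + INR n * entropy (INR k / INR n) + (L + Rabs (ln rho) + / (1 - rho)).
Proof.
move=> /INR_gt0 n_gt0 [rho_ge0 rho_lt1] L_ge0 [le_k lt_k1].
set x := INR k / INR n.
have nx : INR n * x = INR k by rewrite /x; field; lra.
have x_ge0 : 0 <= x by have := pos_INR k; nra.
have le_xrho : x <= rho by nra.
have D_ge0 : 0 <= Rabs (ln rho) + / (1 - rho).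
  by have := Rabs_pos (ln rho); have := Rinv_0_lt_compat (1 - rho); lra.
have [d_ge0 d_le1] : 0 <= INR n * (rho - x) <= 1 by nra.
have := Rmult_le_compat_l _ _ _ (Rlt_le _ _ n_gt0) (entropy_sub_le x_ge0 le_xrho rho_lt1).
have := Rmult_le_compat_r _ _ _ L_ge0 d_le1.
have := Rmult_le_compat_r _ _ _ D_ge0 d_le1.
rewrite -nx; lra.
Qed.

Lemma exists_floor r : 0 <= r -> exists k : nat, INR k <= r < INR k + 1.
Proof.
move=> r_ge0; have [up_gt up_le] := archimed r.
have up_gt0 : (0 < up r)%Z by apply: lt_IZR; lra.
exists (Z.to_nat (up r - 1)).
by rewrite INR_IZR_INZ Znat.Z2Nat.id ?minus_IZR /=; [lra | lia].
Qed.

Lemma ln_card_errs_ge q rho : (2 <= q)%N -> 0 <= rho < 1 ->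
  exists c, forall n, (0 < n)%N ->
  INR n * (Hq q rho * ln (INR q)) <=
  ln (INR n + 1) + ln (INR #|errs q n (rho * INR n)|) + c.
Proof.
move=> q_ge2 rho_bnd; have [rho_ge0 rho_lt1] := rho_bnd.
have q_ge2R : 2 <= INR q by apply: (le_INR 2); apply/leP.
have L_ge0 : 0 <= ln (INR q - 1) by rewrite -ln_1; apply: ln_le; lra.
exists (ln (INR q - 1) + Rabs (ln rho) + / (1 - rho)) => n n_gt0.
have [k floor_k] : exists k : nat, INR k <= rho * INR n < INR k + 1.
  by apply: exists_floor; apply: Rmult_le_pos; [lra | apply: pos_INR].
have le_kn : (k <= n)%N.
  apply/leP/INR_le; have := INR_gt0 n_gt0; nra.
have := ln_card_errs_ge_floor q_ge2 n_gt0 le_kn (proj1 floor_k).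
have := entropy_floor_le n_gt0 rho_bnd L_ge0 floor_k.
rewrite Hq_mul_ln; lra.
Qed.

Lemma ln_le_tangent m x : 0 < m -> 0 < x -> ln x <= ln m + x / m - 1.
Proof.
move=> m_gt0 x_gt0; have xm_gt0 : 0 < x / m by apply: Rdiv_lt_0_compat.
have -> : x = m * (x / m) by field; lra.
rewrite ln_mult // (_ : m * (x / m) / m = x / m); last by field; lra.
by have := ln_le_sub1 xm_gt0; lra.
Qed.

Lemma eventually_ln_succ_le a c : 0 < a -> exists N : nat, forall n, (N <= n)%N ->
  (0 < n)%N /\ ln (INR n + 1) + c <= a * INR n.
Proof.
move=> a_gt0; set K := ln (4 / a) + a / 4 - 1 + c.
have [k [_ lt_k1]] := exists_floor (Rmult_le_pos _ _ (Rabs_pos K)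
  (Rlt_le _ _ (Rinv_0_lt_compat (3 * a / 4) ltac:(lra)))).
exists k.+1 => n le_Nn; have n_ge : INR k + 1 <= INR n by rewrite -S_INR; apply/le_INR/leP.
have K_le : K <= 3 * a / 4 * INR n.
  have := Rle_abs K; have : Rabs K / (3 * a / 4) * (3 * a / 4) = Rabs K by field; lra.
  rewrite /Rdiv in lt_k1 *; nra.
split; first exact: leq_trans le_Nn.
have := ln_le_tangent (Rdiv_lt_0_compat 4 a ltac:(lra) a_gt0)
  (Rplus_le_lt_0_compat _ _ (pos_INR n) Rlt_0_1).
rewrite (_ : (INR n + 1) / (4 / a) = a * (INR n + 1) / 4); last by field; lra.
rewrite /K in K_le; lra.
Qed.

Lemma ln_card_ge_of_rate q n (C : {set word q n}) t : 1 < INR q -> (0 < n)%N ->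
  t <= rate C -> INR n * ln (INR q) * t <= ln (INR #|C|).
Proof.
move=> q_gt1 /INR_gt0 n_gt0 le_t.
have lnq_gt0 : 0 < ln (INR q) by rewrite -ln_1; apply: ln_increasing; lra.
have -> : ln (INR #|C|) = INR n * ln (INR q) * rate C.
  by rewrite /rate /logq; field; split; lra.
by apply: Rmult_le_compat_l => //; nra.
Qed.

Lemma ratio_ge_of_mul_le (m B G b Q : nat) t : (0 < m)%N -> (0 < b)%N ->
  (m * G <= Q)%N -> (B + G)%N = b -> INR Q <= INR m * INR b * t ->
  1 - t <= INR B / INR b.
Proof.
move=> /INR_gt0 m_gt0 /INR_gt0 b_gt0 /leP/le_INR le_mG sum_b le_Q.
rewrite -multE mult_INR in le_mG.
have le_G : INR G <= INR b * t.
  by apply: (Rmult_le_reg_l (INR m)) => //; rewrite -Rmult_assoc; lra.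
have -> : INR B = INR b - INR G by rewrite -sum_b plus_INR; ring.
have -> : (INR b - INR G) / INR b = 1 - INR G / INR b by field; lra.
have : INR G / INR b <= t.
  apply: (Rmult_le_reg_r (INR b)) => //.
  by rewrite /Rdiv Rmult_assoc Rinv_l; lra.
lra.
Qed.

Lemma expn_le_mul_Rpower q n (m b : nat) s : (1 < q)%N -> (0 < m)%N -> (0 < b)%N ->
  INR n * ln (INR q) + s * ln (INR q) <= ln (INR m) + ln (INR b) ->
  INR (q ^ n) <= INR m * INR b * Rpower (INR q) (- s).
Proof.
move=> q_gt1 m_gt0 b_gt0 le_ln; rewrite /Rpower -Ropp_mult_distr_l.
apply: le_mul_exp_of_ln; first by apply/INR_gt0; rewrite expn_gt0 ltnW.
  by apply: Rmult_lt_0_compat; apply: INR_gt0.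
by rewrite ln_INR_expn ln_mult; [lra | apply: INR_gt0 | apply: INR_gt0].
Qed.

Theorem lemma3p4 (q : nat) (rho : R) :
  leq 2 q -> 0 <= rho -> rho < 1 - 1 / INR q ->
  exists kappa : R, 0 < kappa /\
  forall gamma : R, 0 < gamma ->
  exists N : nat, forall n : nat, leq N n ->
  forall C : {set word q n},
    rate C >= 1 - Hq q rho + gamma ->
    exists c : word q n, c \in C /\
      INR #|bad_errs C c (rho * INR n)| / INR #|errs q n (rho * INR n)|
        >= 1 - Rpower (INR q) (- (kappa * gamma * INR n)).
Proof.
move=> q_ge2 rho_ge0 rho_lt.
have q_gt1 : 1 < INR q by apply: (lt_INR 1); apply/ltP.
have lnq_gt0 : 0 < ln (INR q) by rewrite -ln_1; apply: ln_increasing; lra.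
have rho_lt1 : rho < 1.
  by have := Rdiv_lt_0_compat 1 (INR q) Rlt_0_1 ltac:(lra); lra.
have [c errs_ge] := ln_card_errs_ge q_ge2 (conj rho_ge0 rho_lt1).
exists (1 / 2); split=> [|g g_gt0]; first lra.
have glnq_gt0 : 0 < g * ln (INR q) / 2 by nra.
have [N HN] := eventually_ln_succ_le c glnq_gt0.
exists N => n le_Nn C rate_C; have [n_gt0 ln_succ_le] := HN n le_Nn.
set r := rho * INR n; set b := #|errs q n r|.
have b_gt0 : (0 < b)%N.
  by apply: card_errs_gt0 (ltnW q_ge2) _; apply: Rmult_le_pos => //; apply: pos_INR.
have ln_errs := errs_ge n n_gt0; rewrite -/r -/b in ln_errs.
have ln_C := ln_card_ge_of_rate q_gt1 n_gt0 (Rge_le _ _ rate_C).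
have ln_b_le := ln_card_words_le (errs q n r) (ltnW q_ge2); rewrite -/b in ln_b_le.
have gain : 0 < g * ln (INR q) * INR n by have := INR_gt0 n_gt0; nra.
(* The rate bound and [#|errs| <= q ^ n] give [ln #|C| > 0], whereas [ln 0 = 0]. *)
have C_gt0 : (0 < #|C|)%N.
  by rewrite lt0n; apply/eqP => C0; rewrite C0 /= ln_0 in ln_C; nra.
have C_ne0 : C != set0 by rewrite -card_gt0.
have [w Cw few_good] := exists_mul_card_le C_ne0 (sum_card_good_errs C r).
exists w; split=> //; apply/Rle_ge.
apply: (ratio_ge_of_mul_le C_gt0 b_gt0 few_good (card_bad_good_errs C w r)).
by apply: expn_le_mul_Rpower => //; lra.
Qed.
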